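(* Let $R$ be a $*$-ring. The following are equivalent: (1) ${\rm psr}(R)=1$. (2) For any $a,b\in R$ with $aR+bR=R$ there exists a projection $p$ such that $a+bp$ is right invertible. (3) For any $a,b\in R$ with $aR+bR=R$ there exists a projection $p$ such that $a+bp$ is left invertible.
   Context: A $*$-ring is a ring with identity with an involution $*$. A projection is $p$ with $p^2=p=p^*$. ${\rm psr}(R)=1$ means: for any $a,b\in R$ with $aR+bR=R$ there is a projection $p$ such that $a+bp$ is a unit. *)

From mathcomp Require Import all_boot all_algebra.
Set Implicit Arguments. Unset Strict Implicit. Unset Printing Implicit Defensive.
Import GRing.Theory.
Local Open Scope ring_scope.

Definition is_involution (R : pzRingType) (star : R -> R) : Prop :=
  [/\ forall a b : R, star (a + b) = star a + star b,
      forall a b : R, star (a * b) = star b * star a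
    & forall a : R, star (star a) = a].

Definition is_projection (R : pzRingType) (star : R -> R) (p : R) : Prop :=
  p * p = p /\ p = star p.

Definition right_comaximal (R : pzRingType) (a b : R) : Prop :=
  forall r : R, exists x y : R, a * x + b * y = r.

Definition is_unit_elt (R : pzRingType) (u : R) : Prop :=
  exists v : R, u * v = 1 /\ v * u = 1.
Definition right_invertible (R : pzRingType) (u : R) : Prop :=
  exists v : R, u * v = 1.
Definition left_invertible (R : pzRingType) (u : R) : Prop :=
  exists v : R, v * u = 1.

Definition psr_one (R : pzRingType) (star : R -> R) : Prop :=
  forall a b : R, right_comaximal a b ->
    exists p : R, is_projection star p /\ is_unit_elt (a + b * p).

From mathcomp Require Import all_boot all_algebra.
Local Open Scope ring_scope.
Import GRing.Theory.

(* Each of the one-sided conditions forces R to be Dedekind-finite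
   (uv = 1 implies vu = 1), and in a Dedekind-finite ring one-sided inverses
   are two-sided.  Neither the involution nor the projection property of p
   plays any role, so the lemmas are stated for an arbitrary predicate P. *)

Definition dedekind_finite (R : pzRingType) : Prop :=
  forall u v : R, u * v = 1 -> v * u = 1.

Section OneSidedStableRange.

Variables (R : pzRingType) (P : R -> Prop).

Lemma unit_right_invertible (u : R) : is_unit_elt u -> right_invertible u.
Proof. by move=> [v [uv _]]; exists v. Qed.

Lemma unit_left_invertible (u : R) : is_unit_elt u -> left_invertible u.
Proof. by move=> [v [_ vu]]; exists v. Qed.

Lemma dedekind_finite_right_invertible_unit (u : R) :
  dedekind_finite R -> right_invertible u -> is_unit_elt u.
Proof. by move=> dfR [v uv]; exists v; split; last exact: dfR. Qed.

Lemma dedekind_finite_left_invertible_unit (u : R) :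
  dedekind_finite R -> left_invertible u -> is_unit_elt u.
Proof. by move=> dfR [v vu]; exists v; split; first exact: dfR. Qed.

(* Given uv = 1, apply the hypothesis to the comaximal pair (v, 1 - vu):
   c := v + (1 - vu) p satisfies uc = 1, so a right inverse w of c must be u,
   and then c = v. *)
Lemma right_stable_range_dedekind_finite :
  (forall a b : R, right_comaximal a b ->
     exists p, P p /\ right_invertible (a + b * p)) ->
  dedekind_finite R.
Proof.
move=> srR u v uv.
have comax : right_comaximal v (1 - v * u).
  move=> r; exists (u * r), r.
  by rewrite mulrA mulrBl mul1r addrC subrK.
have [p [_ [w cw]]] := srR _ _ comax.
set c := v + (1 - v * u) * p in cw.
have uc : u * c = 1.
  by rewrite /c mulrDr uv mulrA mulrBr mulr1 mulrA uv mul1r subrr mul0r addr0.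
have wu : w = u by rewrite -[w]mul1r -uc -mulrA cw mulr1.
have cv : c = v by rewrite -[v]mul1r -cw wu -mulrA uv mulr1.
by rewrite -cv -{1}wu.
Qed.

(* Given vu = 1, the pair (v, 0) is comaximal, so v itself is left invertible;
   its left inverse must be u. *)
Lemma left_stable_range_dedekind_finite :
  (forall a b : R, right_comaximal a b ->
     exists p, P p /\ left_invertible (a + b * p)) ->
  dedekind_finite R.
Proof.
move=> srR v u vu.
have comax : right_comaximal v 0.
  by move=> r; exists (u * r), 0; rewrite mulrA vu mul1r mul0r addr0.
have [p [_ [w wv]]] := srR _ _ comax.
rewrite mul0r addr0 in wv.
have wu : w = u by rewrite -[w]mulr1 -vu mulrA wv mul1r.
by rewrite -wu.
Qed.

End OneSidedStableRange.

Theorem proposition4p2 (R : pzRingType) (star : R -> R)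
  (Hstar : is_involution star) :
  (psr_one star <->
     (forall a b : R, right_comaximal a b ->
        exists p : R, is_projection star p /\ right_invertible (a + b * p))) /\
  (psr_one star <->
     (forall a b : R, right_comaximal a b ->
        exists p : R, is_projection star p /\ left_invertible (a + b * p))).
Proof.
split; split=> srR a b comax.
- have [p [pp unit_abp]] := srR a b comax.
  by exists p; split; last exact: unit_right_invertible.
- have [p [pp rinv_abp]] := srR a b comax.
  exists p; split=> //; apply: dedekind_finite_right_invertible_unit rinv_abp.
  exact: right_stable_range_dedekind_finite srR.
- have [p [pp unit_abp]] := srR a b comax.
  by exists p; split; last exact: unit_left_invertible.
- have [p [pp linv_abp]] := srR a b comax.
  exists p; split=> //; apply: dedekind_finite_left_invertible_unit linv_abp.
  exact: left_stable_range_dedekind_finite srR.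
Qed.
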